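(* In the Byblos protocol described in the context, at all times, if $P=\mathit{pending}[t]$ is a non-empty pending set calculated by a correct server, then $\bigcup_{t'<t}\mathit{confirmed}[t']\subseteq P$, where $\mathit{confirmed}[t']$ is the confirmed set of any correct server.
   Context: Byblos protocol. There are $n=4f+1$ servers, at most $f$ of which are Byzantine; the rest are correct. Clients are not Byzantine (they may crash). Messages between correct parties are eventually delivered, channels are FIFO, senders are authenticated, and client messages are signed and unforgeable. Each correct server keeps an integer $\mathit{clock}$ (initially $0$), sets $\mathit{proposed}[s]$ of pairs $(T,k)$ for each server $s$, maps $\mathit{confirmed}[t]$ and $\mathit{pending}[t]$ from timestamps to sets of transactions (initially empty), and sets $\mathit{ConfirmWitness}[T]$ of servers. Client with transaction $T$: broadcasts $\mathrm{Propose}(T)$; waits for $\mathrm{ProposeAck}(T,\cdot)$ from at least $n-f$ servers; letting $\mathit{timestamp}[s]$ be the value from server $s$ ($0$ if none), sets $\hat t$ to $1$ plus the $(f+1)$-st largest value; broadcasts $\mathrm{Confirm}(T,\hat t)$. Correct server: on $\mathrm{Propose}(T)$ from a client, adds $(T,\mathit{clock})$ to $\mathit{proposed}[\mathit{self}]$, sends $\mathrm{Proposed}(T,\mathit{clock})$ to all servers and $\mathrm{ProposeAck}(T,\mathit{clock})$ to the client; on $\mathrm{Proposed}(T,k)$ from server $s$, adds $(T,k)$ to $\mathit{proposed}[s]$; on $\mathrm{Confirm}(T,\hat t)$ from a client or server $s$: sets $\mathit{clock}:=\max(\mathit{clock},\hat t)$, adds $T$ to $\mathit{confirmed}[\hat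 t]$, forwards $\mathrm{Confirm}(T,\hat t)$ to all servers if not previously sent, adds $s$ to $\mathit{ConfirmWitness}[T]$, and if $\mathit{pending}[\hat t]=\emptyset$ and $|\mathit{ConfirmWitness}[T]|=n-f$, sets $\mathit{pending}[\hat t]$ to the set of all $T'$ such that $(T',k)\in\mathit{proposed}[s']$ for some $s'\in\mathit{ConfirmWitness}[T]$ and some $k\le\hat t$. *)

From mathcomp Require Import all_boot.
Set Implicit Arguments. Unset Strict Implicit. Unset Printing Implicit Defensive.

Definition nsrv (f : nat) : nat := (4 * f).+1.

Inductive msg (Tx : Type) :=
| MPropose of Tx            (* client -> server : Propose(T)        *)
| MProposed of Tx & nat     (* server -> server : Proposed(T,k)     *)
| MProposeAck of Tx & nat   (* server -> client : ProposeAck(T,k)   *)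
| MConfirm of Tx & nat.     (* client/server -> server : Confirm(T,t) *)
Arguments MPropose {Tx}. Arguments MProposed {Tx}.
Arguments MProposeAck {Tx}. Arguments MConfirm {Tx}.

Inductive phase := Idle | Waiting | Done.
Definition is_waiting (p : phase) : bool := if p is Waiting then true else false.

Definition upd (A : eqType) (B : Type) (g : A -> B) (a : A) (b : B) : A -> B :=
  fun x => if x == a then b else g x.

Section Byblos.
Variable f : nat.
Variable Tx : eqType.          (* transactions; each transaction is issued by its own client *)
Variable Byz : {set 'I_(nsrv f)}.
Local Notation N := (nsrv f).

(* network nodes: servers (inl) and clients (inr), a client being identified
   with the transaction it submits *)
Definition node := ('I_N + Tx)%type.
Definition is_srv (x : node) : bool := if x is inl _ then true else false.

Definition chans := node -> node -> seq (msg Tx).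

Definition push (c : chans) (x y : node) (m : msg Tx) : chans :=
  fun a b => if (a == x) && (b == y) then rcons (c a b) m else c a b.
Definition bcast (c : chans) (x : node) (m : msg Tx) : chans :=
  fun a b => if (a == x) && is_srv b then rcons (c a b) m else c a b.
Definition setch (c : chans) (x y : node) (l : seq (msg Tx)) : chans :=
  fun a b => if (a == x) && (b == y) then l else c a b.

(* local state of a correct server; sets are represented by sequences
   (membership = set membership) *)
Record sstate := SState {
  clock : nat;
  proposed : 'I_N -> seq (Tx * nat);
  confirmed : nat -> seq Tx;
  pending : nat -> seq Tx;
  cwit : Tx -> {set 'I_N};
  fwd : seq (Tx * nat)            (* Confirm messages already forwarded *)
}.

Record cstate := CState {
  cph : phase;
  acks : 'I_N -> option nat       (* ProposeAck value received from each server *)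
}.

Record gstate := GState {
  srv : 'I_N -> sstate;
  cli : Tx -> cstate;
  net : chans;
  signed : seq (Tx * nat)         (* Confirm(T,t) messages signed by clients *)
}.

Definition pendset (pr : 'I_N -> seq (Tx * nat)) (W : {set 'I_N}) (t : nat) : seq Tx :=
  flatten [seq [seq p.1 | p <- pr s' & p.2 <= t] | s' <- enum W].

Definition handle (s : 'I_N) (x : node) (m : msg Tx) (ss : sstate) (c : chans)
  : sstate * chans :=
  match m, x with
  | MPropose T, inr _ =>
      let k := clock ss in
      (SState k (upd (proposed ss) s (rcons (proposed ss s) (T, k)))
              (confirmed ss) (pending ss) (cwit ss) (fwd ss),
       push (bcast c (inl s) (MProposed T k)) (inl s) x (MProposeAck T k))
  | MProposed T k, inl s' =>
      (SState (clock ss) (upd (proposed ss) s' (rcons (proposed ss s') (T, k)))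
              (confirmed ss) (pending ss) (cwit ss) (fwd ss), c)
  | MConfirm T t, _ =>
      let clk := maxn (clock ss) t in
      let conf := upd (confirmed ss) t (rcons (confirmed ss t) T) in
      let already := (T, t) \in fwd ss in
      let c' := if already then c else bcast c (inl s) (MConfirm T t) in
      let fwd' := if already then fwd ss else (T, t) :: fwd ss in
      let W := match x with inl s' => s' |: cwit ss T | inr _ => cwit ss T end in
      let wit' := upd (cwit ss) T W in
      let pend' := if nilp (pending ss t) && (#|W| == N - f)
                   then upd (pending ss) t (pendset (proposed ss) W t)
                   else pending ss in
      (SState clk (proposed ss) conf pend' wit' fwd', c')
  | _, _ => (ss, c)
  end.

Definition nacks (ac : 'I_N -> option nat) : nat := #|[pred s : 'I_N | isSome (ac s)]|.
Definition tsv (ac : 'I_N -> option nat) (s : 'I_N) : nat :=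
  if ac s is Some k then k else 0.
Definition that (ac : 'I_N -> option nat) : nat :=
  (nth 0 (sort geq [seq tsv ac s | s <- enum 'I_N]) f).+1.

Definition init_sstate : sstate :=
  SState 0 (fun _ => [::]) (fun _ => [::]) (fun _ => [::]) (fun _ => set0) [::].
Definition init : gstate :=
  GState (fun _ => init_sstate) (fun _ => CState Idle (fun _ => None))
         (fun _ _ => [::]) [::].

Inductive step : gstate -> gstate -> Prop :=
| StClientPropose st T :
    cph (cli st T) = Idle ->
    step st (GState (srv st) (upd (cli st) T (CState Waiting (acks (cli st T))))
                    (bcast (net st) (inr T) (MPropose T)) (signed st))
| StClientRecv st T s m rest :
    net st (inl s) (inr T) = m :: rest ->
    let cs := cli st T in
    let cs' := match m with
               | MProposeAck T' k =>
                   if (T' == T) && is_waiting (cph cs) && (acks cs s == None)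
                   then CState (cph cs) (upd (acks cs) s (Some k)) else cs
               | _ => cs end in
    step st (GState (srv st) (upd (cli st) T cs')
                    (setch (net st) (inl s) (inr T) rest) (signed st))
| StClientConfirm st T :
    cph (cli st T) = Waiting ->
    N - f <= nacks (acks (cli st T)) ->
    let th := that (acks (cli st T)) in
    step st (GState (srv st) (upd (cli st) T (CState Done (acks (cli st T))))
                    (bcast (net st) (inr T) (MConfirm T th)) ((T, th) :: signed st))
| StServerRecv st s x m rest :
    s \notin Byz ->
    net st x (inl s) = m :: rest ->
    let r := handle s x m (srv st s) (setch (net st) x (inl s) rest) in
    step st (GState (upd (srv st) s r.1) (cli st) r.2 (signed st))
| StByzSend st s y m :
    s \in Byz ->
    (* client messages are signed: Byzantine servers cannot forge Confirm *)
    (forall T t, m = MConfirm T t -> (T, t) \in signed st) ->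
    step st (GState (srv st) (cli st) (push (net st) (inl s) y m) (signed st)).

Inductive reachable : gstate -> Prop :=
| ReachInit : reachable init
| ReachStep st st' : reachable st -> step st st' -> reachable st'.

End Byblos.

From mathcomp Require Import all_boot zify.
Set Implicit Arguments. Unset Strict Implicit. Unset Printing Implicit Defensive.

(* Let [pending[t]] be computed by a correct server [s1] from a quorum [W] of
   [n - f] witnesses of some [Confirm(T0, t)].  A correct [s] in [W] forwarded that
   confirm only after raising its clock to at least [t]; its proposals stamped below
   [t] were therefore sent earlier on the FIFO channel to [s1], so [s1] knew them
   when it computed [pending[t]], and [s] can make no new ones later.  Now let [T] be
   confirmed with timestamp [t' < t].  Its client saw [n - f] acknowledgements, of
   which at most [f] are [>= t'], so at least [n - 2f] servers acknowledged [T] with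
   a stamp below [t'].  Since [(n - f) + (n - 2f) > n + f], one of them is a correct
   member of [W]; it acknowledged the stamp of its own proposal of [T], so [T] lies
   in [pending[t]]. *)

Lemma count_gt_nth_sorted (s : seq nat) n :
  sorted geq s -> count (fun x => nth 0 s n < x) s <= n.
Proof.
move=> s_sorted; have [le_s_n|lt_n_s] := leqP (size s) n.
  exact: leq_trans (count_size _ _) le_s_n.
have geq_trans : transitive geq by move=> a b c /= ba cb; exact: leq_trans cb ba.
set v := nth 0 s n.
have drop_small : count (fun x => v < x) (drop n s) = 0.
  have := subseq_sorted geq_trans (drop_subseq s n) s_sorted.
  rewrite (drop_nth 0 lt_n_s) /= => /(order_path_min geq_trans) /allP le_v.
  rewrite ltnn; apply/eqP; rewrite eqn0Ngt -has_count.
  by apply/hasPn => x /le_v; rewrite -leqNgt.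
rewrite -(cat_take_drop n s) count_cat drop_small addn0.
by apply: leq_trans (count_size _ _) _; rewrite size_take lt_n_s.
Qed.

Lemma card_that_le_tsv f (ac : 'I_(nsrv f) -> option nat) :
  #|[set s | that ac <= tsv ac s]| <= f.
Proof.
set L := [seq tsv ac s | s <- enum 'I_(nsrv f)].
have := count_gt_nth_sorted f (sort_sorted (fun a b => leq_total b a) L).
rewrite (permP (permEl (perm_sort geq L))) count_map cardsE cardE /enum_mem.
rewrite size_filter count_filter => le_f; apply: leq_trans le_f.
by apply/eq_leq/eq_count => s; rewrite /= andbT.
Qed.

Lemma card_setI_ge (T : finType) (A B : {set T}) : #|A| + #|B| - #|T| <= #|A :&: B|.
Proof. by rewrite -cardsUI leq_subLR leq_add2r max_card. Qed.

Lemma honest_ack_below_that f (Byz W : {set 'I_(nsrv f)}) (ac : 'I_(nsrv f) -> option nat) :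
  #|Byz| <= f -> nsrv f - f <= nacks ac -> #|W| = nsrv f - f ->
  exists s k, [/\ s \in W, s \notin Byz, ac s = Some k & k < that ac].
Proof.
move=> card_Byz quorum_ac card_W.
set acked := [set s | isSome (ac s)]; set high := [set s | that ac <= tsv ac s].
have card_low : nsrv f - 2 * f <= #|acked :\: high|.
  rewrite cardsD mulSn mul1n subnDA; apply: leq_sub.
    by rewrite /acked cardsE.
  exact: leq_trans (subset_leq_card (subsetIr _ _)) (card_that_le_tsv ac).
have : ~~ (W :&: (acked :\: high) \subset Byz).
  apply: contraTN card_Byz => /subset_leq_card; rewrite -ltnNge; apply: leq_trans.
  have := card_setI_ge W (acked :\: high); rewrite card_ord card_W.
  (* [set] merges two elaborations of this cardinal into a single atom for [lia]. *)
  set m := #|acked :\: high| in card_low *; rewrite /nsrv in card_low *; lia.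
case/subsetPn => s; rewrite !inE /tsv -ltnNge => /and3P [s_W lt_s acked_s] s_Byz.
by case ac_s: (ac s) lt_s acked_s => [k|//] lt_k _; exists s, k.
Qed.

Lemma In_rcons (A : Type) (l : seq A) a m : List.In m (rcons l a) <-> List.In m l \/ m = a.
Proof. by rewrite -cats1 List.in_app_iff /=; intuition. Qed.

Section Invariant.
Variable f : nat.
Variable Tx : eqType.
Variable Byz : {set 'I_(nsrv f)}.
Local Notation N := (nsrv f).
Local Notation gst := (gstate f Tx).
Local Notation own st s := (proposed (srv st s) s).

Lemma In_setch (c : chans f Tx) x y l a b m0 m :
  c x y = m0 :: l -> List.In m (setch c x y l a b) -> List.In m (c a b).
Proof. by rewrite /setch => cxy; case: ifP => // /andP [/eqP -> /eqP ->]; rewrite cxy; right. Qed.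

Lemma In_bcast (c : chans f Tx) x m0 a b m :
  List.In m (bcast c x m0 a b) -> List.In m (c a b) \/ (m = m0 /\ a = x).
Proof.
rewrite /bcast; case: ifP => [/andP [/eqP -> _]|_]; last by left.
by case/In_rcons; [left|right].
Qed.

Lemma In_push (c : chans f Tx) x y m0 a b m :
  List.In m (push c x y m0 a b) -> List.In m (c a b) \/ (m = m0 /\ a = x /\ b = y).
Proof.
rewrite /push; case: ifP => [/andP [/eqP -> /eqP ->]|_]; last by left.
by case/In_rcons; [left|right].
Qed.

(* [Proposed(T,k)] is queued in [l] ahead of every [Confirm] stamped above [k]. *)
Fixpoint in_flight (T : Tx) (k : nat) (l : seq (msg Tx)) : Prop :=
  if l is m :: l' then
    m = MProposed T k \/ (if m is MConfirm _ t then t <= k else True) /\ in_flight T k l'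
  else False.

Lemma in_flight_rcons T k l m : in_flight T k l -> in_flight T k (rcons l m).
Proof. by elim: l => //= m' l IHl [->|[le_m /IHl]]; [left|right]. Qed.

Lemma in_flight_rcons_proposed T k l :
  (forall T' t, List.In (MConfirm T' t) l -> t <= k) -> in_flight T k (rcons l (MProposed T k)).
Proof.
elim: l => [|m l IHl] le_k /=; first by left.
right; split; last by apply: IHl => T' t in_l; apply: (le_k T' t); right.
by case: m le_k => // T' t le_k; apply: (le_k T' t); left.
Qed.

Lemma in_flight_bcast (c : chans f Tx) x m a b T k :
  in_flight T k (c a b) -> in_flight T k (bcast c x m a b).
Proof. by rewrite /bcast; case: ifP => // _; apply: in_flight_rcons. Qed.

Lemma in_flight_setch (c : chans f Tx) x y m l a b T k :
  c x y = m :: l -> m <> MProposed T k ->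
  in_flight T k (c a b) -> in_flight T k (setch c x y l a b).
Proof.
rewrite /setch => cxy not_prop; case: ifP => // /andP [/eqP -> /eqP ->].
by rewrite cxy => -[/not_prop|[]].
Qed.

Definition client_confirmed (st : gst) (T : Tx) (t : nat) : Prop :=
  [/\ cph (cli st T) = Done, t = that (acks (cli st T)) & N - f <= nacks (acks (cli st T))].

(* Stable under steps: later proposals of [s] are stamped with its clock, already >= [t]. *)
Definition settled (st : gst) (s : 'I_N) (t : nat) (P : Tx -> nat -> Prop) : Prop :=
  t <= clock (srv st s) /\ forall T k, (T, k) \in own st s -> k < t -> P T k.

Lemma settled_mono (st st' : gst) s t (P P' : Tx -> nat -> Prop) :
  settled st s t P -> clock (srv st s) <= clock (srv st' s) ->
  (forall p, p \in own st' s -> p \in own st s \/ clock (srv st s) <= p.2) ->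
  (forall T k, k < t -> P T k -> P' T k) -> settled st' s t P'.
Proof.
move=> [le_t P_low] le_clock own_new P_P'; split; first exact: leq_trans le_clock.
move=> T k /own_new [/P_low P_k lt_k|/= le_k lt_k]; first exact: P_P' lt_k (P_k lt_k).
by move: (leq_trans le_t le_k); rewrite leqNgt lt_k.
Qed.

Record inv (st : gst) : Prop := {
  sig_net : forall x y T t, List.In (MConfirm T t) (net st x y) -> (T, t) \in signed st;
  sig_confirmed : forall s T t, s \notin Byz ->
    T \in confirmed (srv st s) t -> (T, t) \in signed st;
  sig_client : forall T t, (T, t) \in signed st -> client_confirmed st T t;
  ack_own : forall s T k, s \notin Byz -> acks (cli st T) s = Some k -> (T, k) \in own st s;
  ack_net_own : forall s y T k, s \notin Byz ->
    List.In (MProposeAck T k) (net st (inl s) y) -> (T, k) \in own st s;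
  proposed_net_own : forall s y T k, s \notin Byz ->
    List.In (MProposed T k) (net st (inl s) y) -> (T, k) \in own st s;
  own_in_flight : forall s s1 T k, s \notin Byz -> s1 \notin Byz -> (T, k) \in own st s ->
    (T, k) \in proposed (srv st s1) s \/ in_flight T k (net st (inl s) (inl s1));
  confirm_net_clock : forall s y T t, s \notin Byz ->
    List.In (MConfirm T t) (net st (inl s) y) -> t <= clock (srv st s);
  witness_signed : forall s1 s T, s1 \notin Byz -> s \in cwit (srv st s1) T ->
    exists t, (T, t) \in signed st;
  witness_settled : forall s1 s T t, s1 \notin Byz -> s \notin Byz ->
    s \in cwit (srv st s1) T -> (T, t) \in signed st ->
    settled st s t (fun T' k => (T', k) \in proposed (srv st s1) s);
  pending_quorum : forall s1 t, s1 \notin Byz -> pending (srv st s1) t != [::] ->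
    exists2 W : {set 'I_N}, #|W| = N - f &
      forall s, s \in W -> s \notin Byz -> settled st s t (fun T _ => T \in pending (srv st s1) t)
}.

Lemma inv_init : inv (init f Tx).
Proof. by split => //= s1 s T _; rewrite in_set0. Qed.

Lemma signed_unique (st : gst) T t t' :
  inv st -> (T, t) \in signed st -> (T, t') \in signed st -> t = t'.
Proof. by move=> Ist /(sig_client Ist) [_ -> _] /(sig_client Ist) [_ -> _]. Qed.

Lemma inv_quiet (st st' : gst) :
  inv st -> (forall s, srv st' s = srv st s) -> {subset signed st <= signed st'} ->
  (forall T t, (T, t) \in signed st' -> (T, t) \in signed st \/
     forall s1 s, s1 \notin Byz -> s \notin cwit (srv st s1) T) ->
  (forall s y m, s \notin Byz -> List.In m (net st' (inl s) y) -> List.In m (net st (inl s) y)) ->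
  (forall s s1 T k, s \notin Byz ->
     in_flight T k (net st (inl s) (inl s1)) -> in_flight T k (net st' (inl s) (inl s1))) ->
  (forall x y T t, List.In (MConfirm T t) (net st' x y) -> (T, t) \in signed st') ->
  (forall T t, (T, t) \in signed st' -> client_confirmed st' T t) ->
  (forall s T k, s \notin Byz -> acks (cli st' T) s = Some k -> (T, k) \in own st s) ->
  inv st'.
Proof.
move=> Ist same_srv sub_signed new_signed net_sub in_flight' sig_net' sig_client' ack_own'.
split => //.
- by move=> s T t s_ok; rewrite same_srv => /(sig_confirmed Ist s_ok) /sub_signed.
- by move=> s T k s_ok; rewrite same_srv; apply: ack_own'.
- by move=> s y T k s_ok; rewrite same_srv => /(net_sub _ _ _ s_ok) /(ack_net_own Ist s_ok).
- by move=> s y T k s_ok; rewrite same_srv => /(net_sub _ _ _ s_ok) /(proposed_net_own Ist s_ok).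
- move=> s s1 T k s_ok s1_ok; rewrite !same_srv => /(own_in_flight Ist s_ok s1_ok).
  by case=> [|/(in_flight' _ _ _ _ s_ok)]; [left|right].
- by move=> s y T t s_ok; rewrite same_srv => /(net_sub _ _ _ s_ok) /(confirm_net_clock Ist s_ok).
- move=> s1 s T s1_ok; rewrite same_srv => /(witness_signed Ist s1_ok) [t signed_t].
  by exists t; apply: sub_signed.
- move=> s1 s T t s1_ok s_ok; rewrite same_srv => wit /new_signed [signed_t|no_wit].
    by rewrite /settled !same_srv; apply: (witness_settled Ist s1_ok s_ok wit).
  by rewrite (negbTE (no_wit _ _ s1_ok)) in wit.
- move=> s1 t s1_ok; rewrite same_srv => /(pending_quorum Ist s1_ok) [W card_W W_settled].
  by exists W => // s s_W s_ok; rewrite /settled same_srv; apply: W_settled.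
Qed.

Lemma inv_client_propose (st : gst) T :
  inv st -> cph (cli st T) = Idle ->
  inv (GState (srv st) (upd (cli st) T (CState Waiting (acks (cli st T))))
              (bcast (net st) (inr T) (MPropose T)) (signed st)).
Proof.
move=> Ist idle; apply: (inv_quiet Ist) => //=.
- by move=> T0 t ->; left.
- by move=> x y T0 t /In_bcast [/(sig_net Ist)|[]].
- move=> T0 t /(sig_client Ist) [done_T0 ? ?].
  rewrite /client_confirmed /= /upd; case: eqP => // eq_T0.
  by rewrite -eq_T0 done_T0 in idle.
- by move=> s T0 k s_ok; rewrite /upd; case: eqP => [->|_]; apply: (ack_own Ist).
Qed.

Lemma inv_client_recv (st : gst) T s m rest :
  inv st -> net st (inl s) (inr T) = m :: rest ->
  let cs := cli st T in
  let cs' := match m with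
             | MProposeAck T' k =>
                 if (T' == T) && is_waiting (cph cs) && (acks cs s == None)
                 then CState (cph cs) (upd (acks cs) s (Some k)) else cs
             | _ => cs end in
  inv (GState (srv st) (upd (cli st) T cs') (setch (net st) (inl s) (inr T) rest) (signed st)).
Proof.
move=> Ist net_sT cs cs'; apply: (inv_quiet Ist) => //=.
- by move=> T0 t ->; left.
- by move=> s0 y m0 _; apply: In_setch net_sT.
- by move=> s0 s1 T0 k _; rewrite /setch /= andbF.
- by move=> x y T0 t /(In_setch net_sT) /(sig_net Ist).
- move=> T0 t /(sig_client Ist) [done_T0 ? ?].
  rewrite /client_confirmed /= /upd; case: eqP => // eq_T0.
  suff -> : cs' = cs by rewrite /cs -eq_T0.
  by rewrite /cs' /cs; case: m {net_sT cs'} => // T1 k; rewrite -eq_T0 done_T0 andbF.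
- move=> s0 T0 k s0_ok; rewrite /upd; case: eqP => [->|_]; last exact: ack_own.
  rewrite /cs' /cs; case: m net_sT {cs'} => [?|? ?|T1 k1|? ?] net_sT; try exact: ack_own.
  case: ifP => [/andP [/andP [/eqP eq_T1 _] _]|_]; last exact: ack_own.
  rewrite -eq_T1 in net_sT *.
  rewrite /= /upd; case: eqP => [eq_s [<-]|_]; last exact: ack_own.
  rewrite -eq_s in net_sT; apply: (ack_net_own Ist (y := inr T1) s0_ok).
  by rewrite net_sT; left.
Qed.

Lemma inv_client_confirm (st : gst) T :
  inv st -> cph (cli st T) = Waiting -> N - f <= nacks (acks (cli st T)) ->
  inv (GState (srv st) (upd (cli st) T (CState Done (acks (cli st T))))
              (bcast (net st) (inr T) (MConfirm T (that (acks (cli st T)))))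
              ((T, that (acks (cli st T))) :: signed st)).
Proof.
move=> Ist waiting quorum.
have unsigned t : (T, t) \notin signed st.
  by apply/negP => /(sig_client Ist) [done_T _ _]; rewrite done_T in waiting.
apply: (inv_quiet Ist) => /=.
- by [].
- by move=> p p_signed; rewrite inE p_signed orbT.
- move=> T0 t; rewrite inE => /orP [/eqP [-> _]|]; last by left.
  right=> s1 s s1_ok; apply/negP => /(witness_signed Ist s1_ok) [t'].
  by rewrite (negbTE (unsigned t')).
- by move=> s y m _; rewrite /bcast.
- by move=> s s1 T0 k _; rewrite /bcast.
- move=> x y T0 t /In_bcast [/(sig_net Ist) signed_t|[[-> ->] _]].
    by rewrite inE signed_t orbT.
  by rewrite inE eqxx.
- move=> T0 t; rewrite inE /client_confirmed /= /upd => /orP [/eqP [-> ->]|signed_t].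
    by rewrite eqxx.
  case: eqP => [eq_T0|_]; last exact: (sig_client Ist).
  by move: signed_t; rewrite eq_T0 (negbTE (unsigned t)).
- by move=> s T0 k s_ok; rewrite /upd; case: eqP => [->|_]; apply: (ack_own Ist).
Qed.

Lemma inv_byz_send (st : gst) s y m :
  inv st -> s \in Byz -> (forall T t, m = MConfirm T t -> (T, t) \in signed st) ->
  inv (GState (srv st) (cli st) (push (net st) (inl s) y m) (signed st)).
Proof.
move=> Ist s_byz m_signed.
have neq_s s0 : s0 \notin Byz -> (inl s0 == inl s :> node f Tx) = false.
  by apply: contraNF => /eqP [->].
apply: (inv_quiet Ist) => //=.
- by move=> T t ->; left.
- by move=> s0 y0 m0 s0_ok; rewrite /push neq_s.
- by move=> s0 s1 T k s0_ok; rewrite /push neq_s.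
- by move=> x y0 T t /In_push [/(sig_net Ist)|[/esym /m_signed]].
- exact: (sig_client Ist).
- exact: (ack_own Ist).
Qed.

Lemma inv_drop (st : gst) r x m rest :
  inv st -> net st x (inl r) = m :: rest -> (forall s T k, x = inl s -> m <> MProposed T k) ->
  inv (GState (upd (srv st) r (srv st r)) (cli st) (setch (net st) x (inl r) rest) (signed st)).
Proof.
move=> Ist net_x not_proposed; apply: (inv_quiet Ist) => /=.
- by move=> s; rewrite /upd; case: eqP => [->|].
- by [].
- by move=> T t ->; left.
- by move=> s y m0 _; apply: In_setch net_x.
- move=> s s1 T k _; case: (x =P inl s) => [x_s|x_s].
    by apply: (in_flight_setch net_x); apply: not_proposed x_s.
  by rewrite /setch; case: ifP => // /andP [/eqP /esym /x_s []].
- by move=> a b T t /(In_setch net_x) /(sig_net Ist).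
- exact: (sig_client Ist).
- exact: (ack_own Ist).
Qed.

Definition record_proposal (g : 'I_N -> sstate f Tx) r s0 p : 'I_N -> sstate f Tx :=
  let ss := g r in
  upd g r (SState (clock ss) (upd (proposed ss) s0 (rcons (proposed ss s0) p))
                  (confirmed ss) (pending ss) (cwit ss) (fwd ss)).

Lemma record_proposal_frame g r s0 p s : let ss := record_proposal g r s0 p s in
  [/\ clock ss = clock (g s), confirmed ss = confirmed (g s),
      pending ss = pending (g s) & cwit ss = cwit (g s)].
Proof. by rewrite /record_proposal /upd; case: eqP => // ->. Qed.

Lemma mem_record_proposal g r s0 p s s1 p' :
  (p' \in proposed (record_proposal g r s0 p s) s1) =
  (p' \in proposed (g s) s1) || [&& s == r, s1 == s0 & p' == p].
Proof.
rewrite /record_proposal /upd; case: (s =P r) => [->|_]; last by rewrite orbF.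
case: (s1 =P s0) => [->|ne]; rewrite /= ?eqxx /= ?orbF; first by rewrite -cats1 mem_cat inE.
by case: eqP => // /ne.
Qed.

Lemma inv_propose (st : gst) r X T rest :
  inv st -> r \notin Byz -> net st (inr X) (inl r) = MPropose T :: rest ->
  let k := clock (srv st r) in
  let c := setch (net st) (inr X) (inl r) rest in
  inv (GState (record_proposal (srv st) r r (T, k)) (cli st)
        (push (bcast c (inl r) (MProposed T k)) (inl r) (inr X) (MProposeAck T k)) (signed st)).
Proof.
move=> Ist r_ok net_Xr k c; set st' := GState _ _ _ _.
have same s := record_proposal_frame (srv st) r r (T, k) s.
have proposed_mono s s0 p : p \in proposed (srv st s) s0 -> p \in proposed (srv st' s) s0.
  by rewrite mem_record_proposal => ->.
have own_new s p : p \in own st' s -> p \in own st s \/ [/\ s = r, p.1 = T & p.2 = k].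
  by rewrite mem_record_proposal => /orP [|/and3P [/eqP -> _ /eqP ->]]; [left|right].
have net_in a b m : List.In m (net st' a b) ->
    List.In m (net st a b) \/ a = inl r /\ (m = MProposed T k \/ m = MProposeAck T k).
  case/In_push => [|[-> [-> _]]]; last by right; split; last right.
  by case/In_bcast => [/(In_setch net_Xr)|[-> ->]]; [left|right; split; last left].
have net_srv s s1 : net st' (inl s) (inl s1) =
    if s == r then rcons (net st (inl s) (inl s1)) (MProposed T k) else net st (inl s) (inl s1).
  by rewrite /st' /= /push /bcast /c /setch /= andbF andbT.
have settled' s t (P P' : Tx -> nat -> Prop) :
    settled st s t P -> (forall T k, P T k -> P' T k) -> settled st' s t P'.
  move=> settled_s P_P'; apply: (settled_mono settled_s) => [|p /own_new|T0 k0 _ /P_P' //].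
    by have [-> _ _ _] := same s.
  by case=> [|[-> _ ->]]; [left|right].
split.
- by move=> a b T0 t /net_in [/(sig_net Ist)|[_ []]].
- by move=> s T0 t s_ok; have [_ -> _ _] := same s; apply: (sig_confirmed Ist).
- exact: (sig_client Ist).
- by move=> s T0 k0 s_ok /(ack_own Ist s_ok) /proposed_mono.
- move=> s y T0 k0 s_ok /net_in [/(ack_net_own Ist s_ok) /proposed_mono //|[[->] [//|[-> ->]]]].
  by rewrite mem_record_proposal !eqxx orbT.
- move=> s y T0 k0 s_ok.
  case/net_in => [/(proposed_net_own Ist s_ok) /proposed_mono //|[[->] [[-> ->]|//]]].
  by rewrite mem_record_proposal !eqxx orbT.
- move=> s s1 T0 k0 s_ok s1_ok; rewrite net_srv => /own_new [own_T0|[-> /= -> ->]].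
    case/(own_in_flight Ist s_ok s1_ok): own_T0 => [/proposed_mono|]; first by left.
    by right; case: ifP => // _; apply: in_flight_rcons.
  right; rewrite eqxx; apply: in_flight_rcons_proposed => T' t.
  exact: (confirm_net_clock Ist r_ok).
- move=> s y T0 t s_ok; have [-> _ _ _] := same s.
  by case/net_in => [/(confirm_net_clock Ist s_ok)|[_ []]].
- by move=> s1 s T0 s1_ok; have [_ _ _ ->] := same s1; apply: (witness_signed Ist).
- move=> s1 s T0 t s1_ok s_ok; have [_ _ _ ->] := same s1 => wit signed_t.
  by apply: settled' (witness_settled Ist s1_ok s_ok wit signed_t) _ => T' k' /proposed_mono.
- move=> s1 t s1_ok; have [_ _ -> _] := same s1 => /(pending_quorum Ist s1_ok) [W card_W W_settled].
  by exists W => // s s_W s_ok; apply: settled' (W_settled s s_W s_ok) _.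
Qed.

Lemma inv_proposed (st : gst) r s' T k rest :
  inv st -> r \notin Byz -> net st (inl s') (inl r) = MProposed T k :: rest ->
  inv (GState (record_proposal (srv st) r s' (T, k)) (cli st)
        (setch (net st) (inl s') (inl r) rest) (signed st)).
Proof.
move=> Ist r_ok net_s'r; set st' := GState _ _ _ _.
have same s := record_proposal_frame (srv st) r s' (T, k) s.
have proposed_mono s s0 p : p \in proposed (srv st s) s0 -> p \in proposed (srv st' s) s0.
  by rewrite mem_record_proposal => ->.
have own_same s p : s \notin Byz -> p \in own st' s -> p \in own st s.
  move=> s_ok; rewrite mem_record_proposal => /orP [//|/and3P [_ /eqP s_s' /eqP ->]].
  by apply: (proposed_net_own Ist (y := inl r)) => //; rewrite s_s' net_s'r; left.
have settled' s t (P P' : Tx -> nat -> Prop) : s \notin Byz ->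
    settled st s t P -> (forall T k, P T k -> P' T k) -> settled st' s t P'.
  move=> s_ok settled_s P_P'.
  apply: (settled_mono settled_s) => [|p /(own_same _ _ s_ok)|T0 k0 _ /P_P' //]; last by left.
  by have [-> _ _ _] := same s.
split.
- by move=> a b T0 t /(In_setch net_s'r) /(sig_net Ist).
- by move=> s T0 t s_ok; have [_ -> _ _] := same s; apply: (sig_confirmed Ist).
- exact: (sig_client Ist).
- by move=> s T0 k0 s_ok /(ack_own Ist s_ok) /proposed_mono.
- by move=> s y T0 k0 s_ok /(In_setch net_s'r) /(ack_net_own Ist s_ok) /proposed_mono.
- by move=> s y T0 k0 s_ok /(In_setch net_s'r) /(proposed_net_own Ist s_ok) /proposed_mono.
- move=> s s1 T0 k0 s_ok s1_ok /(own_same _ _ s_ok) /(own_in_flight Ist s_ok s1_ok).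
  case=> [/proposed_mono|]; first by left.
  rewrite /st' /= /setch; case: ifP => [/andP [/eqP [->] /eqP [->]]|_]; last by right.
  rewrite net_s'r => -[[<- <-]|[_ in_rest]]; last by right.
  by left; rewrite mem_record_proposal !eqxx orbT.
- move=> s y T0 t s_ok; have [-> _ _ _] := same s.
  by move/(In_setch net_s'r)/(confirm_net_clock Ist s_ok).
- by move=> s1 s T0 s1_ok; have [_ _ _ ->] := same s1; apply: (witness_signed Ist).
- move=> s1 s T0 t s1_ok s_ok; have [_ _ _ ->] := same s1 => wit signed_t.
  apply: settled' (witness_settled Ist s1_ok s_ok wit signed_t) _ => //.
  by move=> T' k' /proposed_mono.
- move=> s1 t s1_ok; have [_ _ -> _] := same s1 => /(pending_quorum Ist s1_ok) [W card_W W_settled].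
  by exists W => // s s_W s_ok; apply: settled' (W_settled s s_W s_ok) _.
Qed.

Lemma pendsetP (pr : 'I_N -> seq (Tx * nat)) (W : {set 'I_N}) t s T k :
  s \in W -> (T, k) \in pr s -> k <= t -> T \in pendset pr W t.
Proof.
move=> s_W pr_s le_k; apply/flattenP; exists [seq p.1 | p <- pr s & p.2 <= t].
  by apply/mapP; exists s; rewrite ?mem_enum.
by apply/mapP; exists (T, k); rewrite // mem_filter pr_s andbT.
Qed.

Definition add_witness (x : node f Tx) (W : {set 'I_N}) : {set 'I_N} :=
  if x is inl s then s |: W else W.

Lemma mem_add_witness x W s : s \in add_witness x W -> s \in W \/ x = inl s.
Proof. by case: x => [s'|X] /=; [rewrite !inE => /orP [/eqP ->|]; [right|left]|left]. Qed.

Lemma settled_of_confirm (st : gst) r x T t rest s :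
  inv st -> r \notin Byz -> s \notin Byz -> net st x (inl r) = MConfirm T t :: rest ->
  s \in add_witness x (cwit (srv st r) T) ->
  settled st s t (fun T' k => (T', k) \in proposed (srv st r) s).
Proof.
move=> Ist r_ok s_ok net_xr /mem_add_witness [wit|x_s].
  apply: (witness_settled Ist r_ok s_ok wit).
  by apply: (sig_net Ist (x := x) (y := inl r)); rewrite net_xr; left.
rewrite x_s in net_xr; split.
  by apply: (confirm_net_clock Ist (y := inl r) s_ok); rewrite net_xr; left.
move=> T' k own_k lt_k; case: (own_in_flight Ist s_ok r_ok own_k) => //.
by rewrite net_xr => -[//|[le_t _]]; move: lt_k; rewrite ltnNge le_t.
Qed.

Definition record_confirm (g : 'I_N -> sstate f Tx) r x T t : 'I_N -> sstate f Tx :=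
  let ss := g r in
  let W := add_witness x (cwit ss T) in
  upd g r (SState (maxn (clock ss) t) (proposed ss)
    (upd (confirmed ss) t (rcons (confirmed ss t) T))
    (if nilp (pending ss t) && (#|W| == N - f)
     then upd (pending ss) t (pendset (proposed ss) W t) else pending ss)
    (upd (cwit ss) T W) (if (T, t) \in fwd ss then fwd ss else (T, t) :: fwd ss)).

Section RecordConfirm.
Variables (g : 'I_N -> sstate f Tx) (r : 'I_N) (x : node f Tx) (T : Tx) (t : nat).
Local Notation g' := (record_confirm g r x T t).

Lemma record_confirm_proposed s : proposed (g' s) = proposed (g s).
Proof. by rewrite /record_confirm /upd; case: eqP => // ->. Qed.

Lemma record_confirm_clock s : clock (g' s) = if s == r then maxn (clock (g r)) t else clock (g s).
Proof. by rewrite /record_confirm /upd; case: eqP => // ->. Qed.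

Lemma mem_record_confirm_confirmed s T' t' :
  T' \in confirmed (g' s) t' -> T' \in confirmed (g s) t' \/ (T', t') = (T, t).
Proof.
rewrite /record_confirm /upd; case: eqP => [->|_] /=; last by left.
case: eqP => [->|_]; last by left.
by rewrite -cats1 mem_cat inE => /orP [|/eqP ->]; [left|right].
Qed.

Lemma mem_record_confirm_cwit s1 s T0 : s \in cwit (g' s1) T0 ->
  s \in cwit (g s1) T0 \/ [/\ s1 = r, T0 = T & s \in add_witness x (cwit (g r) T)].
Proof.
rewrite /record_confirm /upd; case: eqP => [->|_] /=; last by left.
by case: eqP => [->|_]; [right|left].
Qed.

Lemma record_confirm_pending s1 t' :
  let W := add_witness x (cwit (g r) T) in
  pending (g' s1) t' = if [&& s1 == r, t' == t, nilp (pending (g r) t) & #|W| == N - f]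
                       then pendset (proposed (g r)) W t else pending (g s1) t'.
Proof.
rewrite /record_confirm /upd; case: (s1 =P r) => [->|] //=.
by case: (t' =P t) => [->|/eqP/negbTE ne]; case: ifP; rewrite ?eqxx ?ne.
Qed.

End RecordConfirm.

Lemma inv_confirm (st : gst) r x T t rest :
  inv st -> r \notin Byz -> net st x (inl r) = MConfirm T t :: rest ->
  let c := setch (net st) x (inl r) rest in
  inv (GState (record_confirm (srv st) r x T t) (cli st)
        (if (T, t) \in fwd (srv st r) then c else bcast c (inl r) (MConfirm T t)) (signed st)).
Proof.
move=> Ist r_ok net_xr c; set st' := GState _ _ _ _.
have signed_t : (T, t) \in signed st.
  by apply: (sig_net Ist (x := x) (y := inl r)); rewrite net_xr; left.
have clock_mono s : clock (srv st s) <= clock (srv st' s).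
  by rewrite record_confirm_clock; case: eqP => // ->; apply: leq_maxl.
have net_new a b m : List.In m (net st' a b) ->
    List.In m (net st a b) \/ (m = MConfirm T t /\ a = inl r).
  rewrite /st' /=; case: ifP => _; first by move/(In_setch net_xr); left.
  by case/In_bcast => [/(In_setch net_xr)|]; [left|right].
have in_flight_new s s1 T' k : in_flight T' k (net st (inl s) (inl s1)) ->
    in_flight T' k (net st' (inl s) (inl s1)).
  move=> fl; rewrite /st' /=; case: ifP => _; [|apply: in_flight_bcast];
    exact: (in_flight_setch net_xr).
have settled' s t0 (P P' : Tx -> nat -> Prop) :
    settled st s t0 P -> (forall T k, k < t0 -> P T k -> P' T k) -> settled st' s t0 P'.
  move=> settled_s; apply: (settled_mono settled_s) => // p.
  by rewrite record_confirm_proposed; left.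
split.
- by move=> a b T0 t0 /net_new [/(sig_net Ist)|[[-> ->] _]].
- by move=> s T0 t0 s_ok /mem_record_confirm_confirmed [/(sig_confirmed Ist s_ok)|[-> ->]].
- exact: (sig_client Ist).
- by move=> s T0 k s_ok; rewrite record_confirm_proposed; apply: (ack_own Ist).
- move=> s y T0 k s_ok; rewrite record_confirm_proposed.
  by case/net_new => [/(ack_net_own Ist s_ok)|[]].
- move=> s y T0 k s_ok; rewrite record_confirm_proposed.
  by case/net_new => [/(proposed_net_own Ist s_ok)|[]].
- move=> s s1 T0 k s_ok s1_ok; rewrite !record_confirm_proposed.
  by case/(own_in_flight Ist s_ok s1_ok) => [|/in_flight_new]; [left|right].
- move=> s y T0 t0 s_ok /net_new [/(confirm_net_clock Ist s_ok) le_t0|[[_ ->] [->]]].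
    exact: leq_trans le_t0 (clock_mono s).
  by rewrite record_confirm_clock eqxx leq_maxr.
- move=> s1 s0 T0 s1_ok /mem_record_confirm_cwit [/(witness_signed Ist s1_ok)//|[_ -> _]].
  by exists t.
- move=> s1 s T0 t0 s1_ok s_ok /mem_record_confirm_cwit [wit signed_t0|[-> -> s_W] signed_t0].
    apply: settled' (witness_settled Ist s1_ok s_ok wit signed_t0) _ => T' k _.
    by rewrite record_confirm_proposed.
  rewrite -(signed_unique Ist signed_t signed_t0).
  apply: settled' (settled_of_confirm Ist r_ok s_ok net_xr s_W) _ => T' k _.
  by rewrite record_confirm_proposed.
- move=> s1 t' s1_ok; rewrite record_confirm_pending.
  case: ifP => [/and4P [_ /eqP -> _ /eqP card_W] _|_]; last first.
    case/(pending_quorum Ist s1_ok) => W card_W W_settled; exists W => // s s_W s_ok.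
    by apply: settled' (W_settled s s_W s_ok) _.
  exists (add_witness x (cwit (srv st r) T)) => // s s_W s_ok.
  apply: settled' (settled_of_confirm Ist r_ok s_ok net_xr s_W) _ => T' k lt_k.
  by move=> pr_k; apply: (pendsetP s_W pr_k (ltnW lt_k)).
Qed.

Lemma inv_step (st st' : gst) : inv st -> step Byz st st' -> inv st'.
Proof.
move=> Ist st_st'; case: st st' / st_st' Ist.
- by move=> st T idle Ist; apply: inv_client_propose.
- by move=> st T s m rest net_sT cs cs' Ist; apply: inv_client_recv.
- by move=> st T waiting quorum th Ist; apply: inv_client_confirm.
- move=> st r x m rest r_ok net_xr h Ist; rewrite /h {h}.
  case: m net_xr => [T|T k|T k|T t] net_xr; case: x net_xr => [s|X] net_xr;
    try by apply: (inv_drop Ist net_xr).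
  + exact: inv_propose.
  + exact: inv_proposed.
  + exact: (inv_confirm Ist r_ok net_xr).
  + exact: (inv_confirm Ist r_ok net_xr).
- by move=> st s y m s_byz m_signed Ist; apply: inv_byz_send.
Qed.

Lemma inv_reachable (st : gst) : reachable Byz st -> inv st.
Proof. by elim=> [|st0 st1 _ Ist0 /(inv_step Ist0)]; [exact: inv_init|]. Qed.

End Invariant.

Theorem lemma4 (f : nat) (Tx : eqType) (Byz : {set 'I_(nsrv f)})
  (HByz : #|Byz| <= f) (st : gstate f Tx) :
  reachable Byz st ->
  forall (s1 s2 : 'I_(nsrv f)) (t t' : nat) (T : Tx),
    s1 \notin Byz -> s2 \notin Byz ->
    pending (srv st s1) t != [::] ->
    t' < t ->
    T \in confirmed (srv st s2) t' ->
    T \in pending (srv st s1) t.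
Proof.
move=> /inv_reachable Ist s1 s2 t t' T s1_ok s2_ok pending_t lt_t' confirmed_T.
have [_ t'E quorum] := sig_client Ist (sig_confirmed Ist s2_ok confirmed_T).
have [W card_W W_settled] := pending_quorum Ist s1_ok pending_t.
have [s [k [s_W s_ok ack_k lt_k]]] := honest_ack_below_that HByz quorum card_W.
have [_ low_pending] := W_settled s s_W s_ok.
apply: low_pending (ack_own Ist s_ok ack_k) _.
by rewrite -t'E in lt_k; apply: ltn_trans lt_t'.
Qed.
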